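(* Let $(A,B)$ be a Katsura pair. Then the KEP-action $(G_B,E_A)$ is contracting if and only if $(G_{B,\infty},E_{A_\infty})$ is contracting.
   Context: Katsura pair: $N\in\mathbb{N}$, $A\in M_N(\mathbb{N})$ (nonnegative integers), $B\in M_N(\mathbb{Z})$ with $A_{ij}=0\Rightarrow B_{ij}=0$. Graph $E_A$: vertices $\{1,\dots,N\}$, edges $e_{i,j,m}$ ($0\le m<A_{ij}$), $r=i$, $s=j$; $B_e=B_{r(e)s(e)}$. The group bundle $\mathbb{Z}\times E_A^0$ (elements $a_i^k$) acts by $a_i^k\cdot e_{i,j,m}=e_{i,j,\hat m}$, $a_i^k|_{e_{i,j,m}}=a_j^{\hat k}$ with $kB_{ij}+m=\hat kA_{ij}+\hat m$, $0\le\hat m<A_{ij}$, extended recursively to finite paths via $g\cdot(e\nu)=(g\cdot e)(g|_e\cdot\nu)$, $g|_{e\nu}=(g|_e)|_\nu$. $G_B$ is the faithful quotient; $(G_B,E_A)$ is the KEP-action; $(G_B)_i$ its isotropy group at $i$. Infinite part: $E^0_{A,\infty}=\{i:(G_B)_i\text{ infinite}\}$ (then $(G_B)_i=\mathbb{Z}$); $E_{A,\infty}=E_{A_\infty}$ is the subgraph of $E_A$ with vertices $E^0_{A,\infty}$ and edges $\{e:s(e)\in E^0_{A,\infty},B_e\ne0\}$ (its adjacency matrix is $A_\infty$). $G_{B,\infty}=\{g\in G_B: d(g)\in E^0_{A,\infty}\}=\mathbb{Z}\times E^0_{A,\infty}$, and the KEP formulas restrict to an action-restriction pair (possibly non-faithful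 action with restrictions) $(G_{B,\infty},E_{A_\infty})$. Contracting (for a groupoid $G$ with an action-restriction pair on a finite graph $E$): there is a finite $F\subseteq G$ such that for every $g\in G$ there is $n\ge0$ with $g|_\mu\in F$ for all paths $\mu\in d(g)E^k$, $k\ge n$. *)

From mathcomp Require Import all_boot all_order all_algebra.
Set Implicit Arguments. Unset Strict Implicit. Unset Printing Implicit Defensive.
Import Order.TTheory GRing.Theory Num.Theory.
Local Open Scope ring_scope.

(* Edge e_{i,j,m} of E_A : range r = i, source s = j, label m. *)
Record edge (N : nat) := Edge { e_r : 'I_N; e_s : 'I_N; e_m : nat }.
Arguments Edge {N}.

Section Katsura.
Variable N : nat.
Variables (A : 'M[nat]_N) (B : 'M[int]_N).

Definition katsura_pair : Prop := forall i j, A i j = 0%N -> B i j = 0.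

Definition is_edge (e : edge N) : Prop := (e_m e < A (e_r e) (e_s e))%N.

(* p is a finite path (concatenation e1 e2 ... with s(e_l) = r(e_{l+1}))
   with range r(p) = v, all of whose edges satisfy the edge predicate P.
   The empty path is the vertex v. *)
Fixpoint path_from (P : edge N -> Prop) (v : 'I_N) (p : seq (edge N)) : Prop :=
  match p with
  | [::] => True
  | e :: p' => [/\ P e, e_r e = v & path_from P (e_s e) p']
  end.

Definition end_vertex (v : 'I_N) (p : seq (edge N)) : 'I_N := last v (map (@e_s N) p).

(* a_i^k . e_{i,j,m} = e_{i,j,mh},  a_i^k|_{e_{i,j,m}} = a_j^{kh},
   where k B_ij + m = kh A_ij + mh, 0 <= mh < A_ij. *)
Definition act_edge (k : int) (e : edge N) : edge N * int :=
  let t := k * B (e_r e) (e_s e) + (e_m e)%:Z in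
  let a := (A (e_r e) (e_s e))%:Z in
  (Edge (e_r e) (e_s e) `|(t %% a)%Z|%N, (t %/ a)%Z).

Fixpoint act (k : int) (p : seq (edge N)) : seq (edge N) :=
  match p with
  | [::] => [::]
  | e :: p' => (act_edge k e).1 :: act (act_edge k e).2 p'
  end.

(* a_i^k|_{e nu} = (a_i^k|_e)|_nu ; the exponent of the restriction
   (the restriction lives at the vertex end_vertex i p) *)
Fixpoint res (k : int) (p : seq (edge N)) : int :=
  match p with
  | [::] => k
  | e :: p' => res (act_edge k e).2 p'
  end.

(* Faithful quotient: a_i^k and a_i^l define the same element of G_B iff
   they act identically on all finite paths in i E_A^*. *)
Definition kequiv (i : 'I_N) (k l : int) : Prop :=
  forall p, path_from is_edge i p -> act k p = act l p.

(* (G_B)_i is infinite: no finite set of exponents represents all classes. *)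
Definition infinite_vertex (i : 'I_N) : Prop :=
  ~ exists F : seq int, forall k : int, exists2 l, l \in F & kequiv i k l.

(* Contracting KEP-action (G_B, E_A); elements of G_B are represented by
   pairs (i, k) = a_i^k, up to kequiv. *)
Definition contracting_GB : Prop :=
  exists F : seq ('I_N * int),
    forall (i : 'I_N) (k : int), exists n : nat,
      forall p, path_from is_edge i p -> (n <= size p)%N ->
        exists2 f, f \in F &
          f.1 = end_vertex i p /\ kequiv f.1 f.2 (res k p).

(* Edges of E_{A_infty}: edges e of E_A with s(e) in E^0_{A,infty}, B_e <> 0
   (and r(e) in E^0_{A,infty}, so that it is a subgraph on E^0_{A,infty}). *)
Definition inf_edge (e : edge N) : Prop :=
  [/\ is_edge e, infinite_vertex (e_r e), infinite_vertex (e_s e)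
    & B (e_r e) (e_s e) != 0].

(* Contracting action-restriction pair (G_{B,infty}, E_{A_infty}), with
   G_{B,infty} = Z x E^0_{A,infty} (pairs (i,k) with i infinite). *)
Definition contracting_Ginf : Prop :=
  exists F : seq ('I_N * int),
    (forall f, f \in F -> infinite_vertex f.1) /\
    forall (i : 'I_N) (k : int), infinite_vertex i -> exists n : nat,
      forall p, path_from inf_edge i p -> (n <= size p)%N ->
        (end_vertex i p, res k p) \in F.

End Katsura.

From mathcomp Require Import all_boot all_order all_algebra.
From Stdlib Require Import Classical.
From Stdlib Require ClassicalDescription.
Set Implicit Arguments. Unset Strict Implicit. Unset Printing Implicit Defensive.
Import GRing.Theory Num.Theory.
Local Open Scope ring_scope.

(* The exponents k act on the paths from a vertex v as the group Z, so the
   isotropy group at v is either Z itself (v infinite, and kequiv is equality)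
   or a finite cyclic group. If a finite vertex v has an edge e_{v,w,0} to an
   infinite vertex w, then B_vw = 0: restricting a_v^{cA_vw} along it gives
   a_w^{cB_vw}, and these must fall into finitely many classes at w.
   Hence the elements that sit at a finite vertex or are trivial stay so under
   restriction, and every restriction along a path leaving E_{A,oo} is of that
   kind. There are only finitely many classes of such elements, so a nucleus of
   G_{B,oo} together with them is a nucleus of G_B; conversely a nucleus of G_B,
   cut down to the infinite vertices where classes are singletons, is one for
   G_{B,oo}. *)

Lemma seq_filter_prop (T : eqType) (s : seq T) (P : T -> Prop) :
  exists s' : seq T, forall x, x \in s' <-> x \in s /\ P x.
Proof.
pose decide x := ClassicalDescription.excluded_middle_informative (P x).
exists [seq x <- s | decide x] => x; rewrite mem_filter /decide.
by case: ClassicalDescription.excluded_middle_informative => Px;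
  split=> // [[]].
Qed.

Lemma mulz_seq_eq0 (S : seq int) (b : int) :
  (forall c : int, c * b \in S) -> b = 0.
Proof.
move=> HS; apply/eqP/negPn/negP => b0.
set s := mkseq (fun n => n%:Z * b) (size S).+1.
have s_uniq : uniq s by apply: mkseq_uniq => m n /(mulIf b0) [].
have s_sub : {subset s <= S} by move=> _ /mapP [n _ ->].
by have := uniq_leq_size s_uniq s_sub; rewrite size_mkseq ltnn.
Qed.

Section KatsuraAction.
Variables (N : nat) (A : 'M[nat]_N) (B : 'M[int]_N).

Local Notation act_edge := (act_edge A B).
Local Notation act := (act A B).
Local Notation res := (res A B).
Local Notation kequiv := (kequiv A B).
Local Notation infinite_vertex := (infinite_vertex A B).
Local Notation edge_path := (path_from (is_edge A)).
Local Notation inf_path := (path_from (inf_edge A B)).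

Lemma path_from_sub (P Q : edge N -> Prop) v p :
  (forall e, P e -> Q e) -> path_from P v p -> path_from Q v p.
Proof.
move=> PQ; elim: p v => [//|e p IH] v [Pe Hr Hp].
by split=> //; [exact: PQ | exact: IH].
Qed.

Lemma act_edge0 e : is_edge A e -> act_edge 0 e = (e, 0).
Proof.
case: e => r s m; rewrite /is_edge /act_edge /= mul0r add0r => Hm.
by rewrite modz_small ?divz_small ?ltz_nat.
Qed.

Lemma act_edgeD k l e : is_edge A e ->
  act_edge (k + l) e =
  let (e', l') := act_edge l e in ((act_edge k e').1, l' + (act_edge k e').2).
Proof.
case: e => r s m; rewrite /is_edge /act_edge /= => Hm.
set a := (A r s)%:Z; set b := B r s; set t := l * b + m%:Z.
have a0 : a != 0 by rewrite eqz_nat -lt0n (leq_ltn_trans _ Hm).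
rewrite gez0_abs ?modz_ge0 //.
have -> : (k + l) * b + m%:Z = (t %/ a)%Z * a + (k * b + (t %% a)%Z).
  by rewrite addrCA -divz_eq /t mulrDl addrA.
by rewrite modzMDl divzMDl.
Qed.

Lemma act_cons k e p :
  act k (e :: p) = (act_edge k e).1 :: act (act_edge k e).2 p.
Proof. by []. Qed.

Lemma act0 v p : edge_path v p -> act 0 p = p.
Proof.
by elim: p v => [//|e p IH] v [He _ Hp]; rewrite act_cons act_edge0 // (IH _ Hp).
Qed.

Lemma actD k l v p : edge_path v p -> act (k + l) p = act k (act l p).
Proof.
elim: p k l v => [//|e p IH] k l v [He _ Hp].
rewrite !act_cons act_edgeD //; case: act_edge => e' l'.
by rewrite addrC (IH _ _ _ Hp).
Qed.

Lemma kequiv_sym v k l : kequiv v k l -> kequiv v l k.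
Proof. by move=> H p Hp; rewrite H. Qed.

Lemma kequiv_trans v k l m : kequiv v k l -> kequiv v l m -> kequiv v k m.
Proof. by move=> Hkl Hlm p Hp; rewrite Hkl // Hlm. Qed.

Lemma kequivDl v m k l : kequiv v k l -> kequiv v (m + k) (m + l).
Proof. by move=> H p Hp; rewrite !(actD _ _ Hp) H. Qed.

Lemma kequiv_subr v k l : kequiv v k l -> kequiv v (k - l) 0.
Proof. by move/(kequivDl (- l)); rewrite addNr addrC. Qed.

Lemma kequiv_mulz v d q : kequiv v d 0 -> kequiv v (q * d) 0.
Proof.
move=> Hd; have Hnat (n : nat) : kequiv v (n%:Z * d) 0.
  elim: n => [|n IH]; first by rewrite mul0r.
  rewrite -addn1 PoszD mulrDl mul1r addrC.
  by apply: kequiv_trans Hd; move/(kequivDl d): IH; rewrite addr0.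
case: q => n; first exact: Hnat.
rewrite NegzE mulNr; apply: kequiv_sym.
by move/(kequivDl (- (n.+1%:Z * d))): (Hnat n.+1); rewrite addNr addr0.
Qed.

Lemma kequiv_modz v d k : kequiv v d 0 -> kequiv v k (k %% d)%Z.
Proof.
move=> /(kequiv_mulz (k %/ d)%Z) /(kequivDl (k %% d)%Z).
by rewrite addr0 addrC -divz_eq.
Qed.

Lemma kequiv_inj v k l : infinite_vertex v -> kequiv v k l -> k = l.
Proof.
move=> Hinf Hkl; apply/eqP; rewrite -subr_eq0; apply/negPn/negP => d0.
apply: Hinf.
exists [seq n%:Z | n <- iota 0 (absz (k - l))] => m.
exists (m %% (k - l))%Z; last exact/kequiv_modz/kequiv_subr.
rewrite -[(m %% _)%Z]gez0_abs ?modz_ge0 // map_f // mem_iota /=.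
by rewrite -ltz_nat gez0_abs ?modz_ge0 // add0n abszE ltz_mod.
Qed.

Lemma kequiv_res_edge v k l e : kequiv v k l -> is_edge A e -> e_r e = v ->
  kequiv (e_s e) (act_edge k e).2 (act_edge l e).2.
Proof. by move=> H He Hr p Hp; case: (H (e :: p) (And3 He Hr Hp)). Qed.

Lemma finite_vertex_reps v : ~ infinite_vertex v ->
  exists F : seq int, forall k, exists2 l, l \in F & kequiv v l k.
Proof.
move=> /NNPP [F HF]; exists F => k.
by have [l lF Hl] := HF k; exists l; last exact: kequiv_sym.
Qed.

Lemma B_eq0_finite_infinite v w : (0 < A v w)%N ->
  ~ infinite_vertex v -> infinite_vertex w -> B v w = 0.
Proof.
move=> Avw Hv Hw; have [F HF] := finite_vertex_reps Hv.
have a0 : (A v w)%:Z != 0 by rewrite eqz_nat -lt0n.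
apply: (@mulz_seq_eq0 [seq (l * B v w %/ A v w)%Z | l <- F]) => c.
have [l lF Hl] := HF (c * A v w).
have := kequiv_inj Hw (kequiv_res_edge (e := Edge v w 0) Hl Avw erefl).
by rewrite /act_edge /= !addr0 mulrAC mulzK // => <-; apply/mapP; exists l.
Qed.

Lemma infinite_end_vertex v p :
  infinite_vertex v -> inf_path v p -> infinite_vertex (end_vertex v p).
Proof. by elim: p v => [//|e p IH] v _ [[_ _ Hs _] _ Hp]; exact: IH Hs Hp. Qed.

Definition finite_or_trivial (v : 'I_N) (k : int) :=
  ~ infinite_vertex v \/ k = 0.

Lemma res_edge_eq0 (k : int) e :
  is_edge A e -> k * B (e_r e) (e_s e) = 0 -> (act_edge k e).2 = 0.
Proof.
by move=> He Hk; rewrite /act_edge /= Hk add0r divz_small // ltz_nat lez_nat He.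
Qed.

Lemma finite_or_trivial_res_edge k e : is_edge A e ->
  finite_or_trivial (e_r e) k -> finite_or_trivial (e_s e) (act_edge k e).2.
Proof.
move=> He Hk; case: (classic (infinite_vertex (e_s e))) => Hs; last by left.
right; apply: (res_edge_eq0 (k := k) He).
case: Hk => [Hr | ->]; last exact: mul0r.
by rewrite (B_eq0_finite_infinite _ Hr Hs) ?mulr0 // (leq_ltn_trans _ He).
Qed.

Lemma finite_or_trivial_res k v p : edge_path v p ->
  finite_or_trivial v k -> finite_or_trivial (end_vertex v p) (res k p).
Proof.
elim: p v k => [//|e p IH] v k [He <- Hp] Hk.
exact/(IH _ _ Hp)/finite_or_trivial_res_edge.
Qed.

Lemma finite_or_trivial_res_off_inf k e : is_edge A e -> ~ inf_edge A B e ->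
  finite_or_trivial (e_s e) (act_edge k e).2.
Proof.
move=> He Hn; case: (classic (infinite_vertex (e_r e))) => Hr; last first.
  by apply: finite_or_trivial_res_edge He _; left.
case: (classic (infinite_vertex (e_s e))) => Hs; last by left.
have B0 : B (e_r e) (e_s e) = 0 by apply/eqP/(contra_notT _ Hn) => B0; split.
by right; apply: (res_edge_eq0 (k := k) He); rewrite B0 mulr0.
Qed.

Lemma inf_path_or_finite_or_trivial_res k v p : edge_path v p ->
  inf_path v p \/ finite_or_trivial (end_vertex v p) (res k p).
Proof.
elim: p v k => [|e p IH] v k; first by left.
move=> [He Hr Hp]; case: (classic (inf_edge A B e)) => Hi.
  by case: (IH _ (act_edge k e).2 Hp) => H; [left | right].
by right; apply/(finite_or_trivial_res Hp)/finite_or_trivial_res_off_inf.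
Qed.

Lemma finite_or_trivial_reps : exists F : seq ('I_N * int),
  forall v k, finite_or_trivial v k -> exists2 l, (v, l) \in F & kequiv v l k.
Proof.
have /fin_all_exists [R HR] : forall v, exists Rv : seq int,
    ~ infinite_vertex v -> forall k, exists2 l, l \in Rv & kequiv v l k.
  move=> v; case: (classic (infinite_vertex v)) => Hv; first by exists [::].
  by have [F HF] := finite_vertex_reps Hv; exists F.
exists [seq (v, l) | v <- enum 'I_N, l <- 0 :: R v] => v k [Hv | ->].
  have [l lR Hl] := HR v Hv k; exists l => //.
  by apply/allpairsPdep; exists v, l; rewrite mem_enum in_cons lR orbT.
by exists 0 => //; apply/allpairsPdep; exists v, 0; rewrite mem_enum mem_head.
Qed.

Lemma contracting_GB_Ginf : contracting_GB A B -> contracting_Ginf A B.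
Proof.
case=> F HF; have [F' HF'] := seq_filter_prop F (fun f => infinite_vertex f.1).
exists F'; split=> [f /HF' [] // | i k Hi].
have [n Hn] := HF i k; exists n => p Hp Hsize.
have Hp' : edge_path i p by apply: path_from_sub Hp => e [].
have [[v l] fF /= [Ev Hl]] := Hn p Hp' Hsize.
have Hend := infinite_end_vertex Hi Hp; rewrite -Ev in Hend.
by rewrite -Ev -(kequiv_inj Hend Hl); apply/HF'.
Qed.

Lemma contracting_Ginf_GB : contracting_Ginf A B -> contracting_GB A B.
Proof.
case=> Fi [_ HFi]; have [Ft HFt] := finite_or_trivial_reps.
exists (Ft ++ Fi) => i k.
have rep v l : finite_or_trivial v l ->
    exists2 f, f \in Ft ++ Fi & f.1 = v /\ kequiv f.1 f.2 l.
  by move=> /HFt [l' Hl' Hk]; exists (v, l'); rewrite ?mem_cat ?Hl'.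
case: (classic (infinite_vertex i)) => Hi; last first.
  by exists 0%N => p Hp _; apply/rep/(finite_or_trivial_res Hp); left.
have [n Hn] := HFi i k Hi; exists n => p Hp Hsize.
case: (inf_path_or_finite_or_trivial_res k Hp) => [Hip | /rep //].
by exists (end_vertex i p, res k p); rewrite ?mem_cat ?Hn ?orbT.
Qed.

End KatsuraAction.

Theorem proposition3p2 (N : nat) (A : 'M[nat]_N) (B : 'M[int]_N) :
  katsura_pair A B -> (contracting_GB A B <-> contracting_Ginf A B).
Proof.
by move=> _; split; [exact: contracting_GB_Ginf | exact: contracting_Ginf_GB].
Qed.
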